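(* Consider $N\ge2$ agents $V=\{1,\dots,N\}$ with states evolving, with zero control input, according to $$\dot x_i(t)=\sum_{j\in\mathcal N_i}|a_{ij}(t)|\bigl(\operatorname{sgn}(a_{ij}(t))\,x_j(t)-x_i(t)\bigr),\qquad i\in V,$$ over a signed time-varying graph $\mathcal G_A(t)$ whose coefficients satisfy (A1)–(A3) below. Suppose $\mathcal G_A(t)$ is uniformly quasi strongly $\delta$-connected with constant $T>0$ such that, for every $t\ge t_0\ge0$, the condensation graph of $G_\delta[t,t+T)$ contains a fixed node set $S\subseteq V$ forming a strongly connected component, with a $\delta$-path in $G_\delta[t,t+T)$ from $S$ to every node of $R:=V\setminus S$. Let $h(t):=\max_{i\in R}|x_i(t)|$, $c(t):=\max_{i\in S}|x_i(t)|$, $N_s:=\operatorname{card}(S)$, and suppose that for almost all $t\ge t_0$ the inequalities $D^+h(t)\le M_0N_s(c(t)-h(t))$ and $D^+c(t)\le0$ hold. Let $s,k\in\mathbb{Z}_{\ge0}$ and $K:=kT$. Then for almost all $t\in[t_0+sK,\,t_0+(s+1)K]$, $$c(t)\le c(t_0+sK),\qquad h(t)\le h(t_0+sK)+c(t_0+sK).$$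
   Context: $\operatorname{sgn}$ is the sign function; $a_{ij}(t)$ is the signed influence of agent $j$ on agent $i$; $\mathcal N_i$ is the set of incoming neighbors of $i$; solutions are Carathéodory (absolutely continuous). $D^+h(t)=\limsup_{s\to0^+}\frac{h(t+s)-h(t)}{s}$ is the upper Dini derivative. Assumptions: (A1) each $a_{ij}(t)$ is piecewise continuous on every compact interval with discontinuity set of Lebesgue measure zero; (A2) $a_{ii}\equiv0$; (A3) there is $M_0>0$ with $\int_{t_1}^{t_2}|a_{ij}(s)|\,ds\le M_0(t_2-t_1)$ for all $t_1\le t_2$. Graph notions: for $\delta>0$, a $\delta$-arc from $j$ to $i$ on $[t_1,t_2)$ means $\int_{t_1}^{t_2}|a_{ij}(t)|\,dt\ge\delta(t_2-t_1)$; a $\delta$-path is a directed path of $\delta$-arcs; $G_\delta[t_1,t_2)$ is the digraph on $V$ of $\delta$-arcs on $[t_1,t_2)$; its condensation graph has the strongly connected components as nodes. Uniformly quasi strongly $\delta$-connected: there is $T>0$ such that for every $t\ge0$ the condensation graph of $G_\delta[t,t+T)$ has a root node with a $\delta$-path to every other node. *)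

From HB Require Import structures.
From mathcomp Require Import all_boot all_order all_algebra.
From mathcomp Require Import all_classical all_reals all_analysis.
Set Implicit Arguments. Unset Strict Implicit. Unset Printing Implicit Defensive.
Import Order.TTheory GRing.Theory Num.Theory.
Import numFieldNormedType.Exports.
Local Open Scope classical_set_scope.
Local Open Scope ring_scope.

Section Defs.
Variable R : realType.

Definition integ (f : R -> R) (t1 t2 : R) : R :=
  Rintegral (@lebesgue_measure R) [set` `[t1, t2]] f.

(* f is piecewise continuous on [t1,t2]: finitely many breakpoints
   t1 = tau 0 <= ... <= tau m = t2, and on each open piece f coincides with
   a function continuous on the closed piece (finite one-sided limits). *)
Definition piecewise_continuous_on (f : R -> R) (t1 t2 : R) : Prop :=
  exists (m : nat) (tau : nat -> R),
    tau 0%N = t1 /\ tau m = t2 /\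
    (forall k, (k < m)%N -> tau k < tau k.+1) /\
    (forall k, (k < m)%N -> exists g : R -> R,
        {within `[tau k, tau k.+1], continuous g} /\
        (forall t, tau k < t < tau k.+1 -> f t = g t)).

Definition A1_coef (f : R -> R) : Prop :=
  forall t1 t2, 0 <= t1 -> t1 <= t2 ->
    piecewise_continuous_on f t1 t2 /\
    (@lebesgue_measure R).-negligible
       [set t | t1 <= t <= t2 /\ ~ {for t, continuous f}].

Definition abs_continuous_on (f : R -> R) (a b : R) : Prop :=
  forall eps : R, 0 < eps -> exists2 d : R, 0 < d &
    forall (n : nat) (l r : nat -> R),
      (forall k, (k < n)%N -> a <= l k /\ l k <= r k /\ r k <= b) ->
      (forall k, (k.+1 < n)%N -> r k <= l k.+1) ->
      \sum_(k < n) (r k - l k) < d ->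
      \sum_(k < n) `|f (r k) - f (l k)| < eps.

Definition dini_upper (h : R -> R) (t : R) : \bar R :=
  limf_esup (fun s => ((h (t + s) - h t) / s)%:E) (at_right 0).

Variable N : nat.

Definition in_nbrs (a : R -> 'I_N -> 'I_N -> R) (t : R) (i : 'I_N) : {set 'I_N} :=
  [set j | a t i j != 0].

Definition rhs (a : R -> 'I_N -> 'I_N -> R) (x : 'I_N -> R) (t : R) (i : 'I_N) : R :=
  \sum_(j in in_nbrs a t i) `|a t i j| * (Num.sg (a t i j) * x j - x i).

Definition caratheodory_solution (a : R -> 'I_N -> 'I_N -> R) (x : R -> 'I_N -> R) : Prop :=
  (forall i u v, 0 <= u -> u <= v -> abs_continuous_on (fun t => x t i) u v) /\
  {ae (@lebesgue_measure R), forall t, 0 <= t -> forall i,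
      derivable (fun s => x s i) t 1 /\
      derive1 (fun s => x s i) t = rhs a (x t) t i}.

(* delta-arc from j to i on [t1,t2): G_delta[t1,t2) as a boolean relation,
   arc_rel j i means there is a delta-arc from j to i *)
Definition arc_rel (a : R -> 'I_N -> 'I_N -> R) (delta t1 t2 : R) : rel 'I_N :=
  fun j i => delta * (t2 - t1) <= integ (fun t => `|a t i j|) t1 t2.

Definition dpath a delta t1 t2 (u v : 'I_N) : bool :=
  connect (arc_rel a delta t1 t2) u v.

Definition is_scc (e : rel 'I_N) (C : {set 'I_N}) : Prop :=
  C != finset.set0 /\
  (forall u v, u \in C -> v \in C -> connect e u v) /\
  (forall u v, u \in C -> connect e u v -> connect e v u -> v \in C).

Definition condensation_has_root (e : rel 'I_N) : Prop :=
  exists C : {set 'I_N}, is_scc e C /\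
    forall v, exists2 u, u \in C & connect e u v.

Definition uniformly_quasi_strongly_connected a delta T : Prop :=
  forall t, 0 <= t -> condensation_has_root (arc_rel a delta t (t + T)).

(* max over a node set of |x_i(t)| (0 for the empty set) *)
Definition maxabs (x : R -> 'I_N -> R) (A : {set 'I_N}) (t : R) : R :=
  \big[Num.max/0]_(i in A) `|x t i|.

End Defs.

(** Both bounds follow from one comparison principle: if [f] is absolutely
    continuous on [[u, v]], [f u <= m], and [D^+ f t <= 0] for almost every
    [t] at which [f t > m], then [f v <= m].  For [c] take [m = c(t_s)] with
    [t_s = t0 + s K]; for [h] take [m = h(t_s) + c(t_s)]: wherever [h > m],
    the monotonicity of [c] gives [c < h], hence [D^+ h <= M0 N_s (c - h) <= 0].
    Only absolute continuity of the solution and the two Dini inequalities are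
    used; in the paper the graph hypotheses serve to derive the latter.

    The principle is proved by real induction on [f t <= m + e (t - u) + e + V t],
    where [V t] is the variation of [f] over nonoverlapping intervals of [[u, t]]
    contained in an open set [G] that covers the exceptional null set and is so
    small that, by absolute continuity, [V <= e].  Outside [G] the Dini bound
    (or, when [f t <= m], continuity) carries the inequality to the right;
    inside [G] the growth of [f] is absorbed by [V]. *)

From HB Require Import structures.
From mathcomp Require Import all_boot all_order all_algebra.
From mathcomp Require Import all_classical all_reals all_analysis.
From mathcomp Require Import ring lra measurable_realfun.
Set Implicit Arguments. Unset Strict Implicit. Unset Printing Implicit Defensive.
Import Order.TTheory GRing.Theory Num.Theory.
Import numFieldNormedType.Exports.
Local Open Scope classical_set_scope.
Local Open Scope ring_scope.

Section RealAnalysisFacts.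
Variable R : realType.

Lemma real_induction (P : R -> Prop) (u v : R) : u <= v -> P u ->
  (forall t, u <= t < v -> P t ->
     exists2 r, 0 < r & forall s, t < s <= v -> s < t + r -> P s) ->
  (forall t, u < t <= v -> (forall s, u <= s < t -> P s) -> P t) ->
  P v.
Proof.
move=> uv Pu step closed.
pose A := [set t | u <= t <= v /\ forall s, u <= s <= t -> P s].
have Au : A u by split=> [|s]; [rewrite lexx uv | rewrite -eq_le => /eqP <-].
have supA : has_sup A by split; [exists u | exists v => t [/andP[_ ->]]].
have uts : u <= sup A := ub_le_sup supA.2 Au.
have tsv : sup A <= v by apply: ge_sup; [exists u | move=> t [/andP[_ ->]]].
have below s : u <= s < sup A -> P s.
  case/andP=> us sts; have : 0 < sup A - s by rewrite subr_gt0.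
  move=> /sup_adherent/(_ supA)[t [_ Pt]]; rewrite opprB addrC subrK => st.
  by apply: Pt; rewrite us ltW.
have Pts : P (sup A).
  by case: (ltgtP u (sup A)) uts => // [uts' _|<- //]; apply: closed; rewrite ?uts'.
have upto z : u <= z <= sup A -> P z.
  case/andP=> uz; rewrite le_eqVlt => /orP[/eqP-> // | zts].
  by apply: below; rewrite uz zts.
have [tsv'|vts|<- //] := ltgtP (sup A) v; last by rewrite leNgt vts in tsv.
have [r r0 Pr] := step _ (introT andP (conj uts tsv')) Pts.
pose s := Num.min (sup A + r / 2) v.
have tss : sup A < s by rewrite lt_min tsv' andbT ltrDl divr_gt0.
have sv : s <= v by rewrite ge_min lexx orbT.
have As : A s.
  split=> [|z /andP[uz zs]]; first by rewrite sv (le_trans uts (ltW tss)).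
  have [zts|tsz] := leP z (sup A); first by apply: upto; rewrite uz zts.
  apply: Pr; first by rewrite tsz (le_trans zs sv).
  by apply: le_lt_trans zs _; rewrite gt_min ltrD2l ltr_pdivrMr // ltr_pMr // ltr1n.
by move: (ub_le_sup supA.2 As); rewrite leNgt tss.
Qed.

Lemma dini_upper_lt (f : R -> R) (t c : R) : (dini_upper f t < c%:E)%E ->
  exists2 r, 0 < r & forall s, 0 < s < r -> f (t + s) - f t <= c * s.
Proof.
case/ereal_inf_lt => _ [V /nbhs_ballP[r r0 rV] <-] supV.
exists r => // s /andP[s0 sr].
have Vs : V s by apply: rV => //; rewrite /ball /= sub0r normrN gtr0_norm.
have : (((f (t + s) - f t) / s)%:E < c%:E)%E.
  by apply: le_lt_trans supV; apply: ereal_sup_ubound; exists s.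
by rewrite lte_fin ltr_pdivrMr // => /ltW.
Qed.

Lemma abs_continuous_on_cont (f : R -> R) (a b t e : R) :
  abs_continuous_on f a b -> a <= t <= b -> 0 < e ->
  exists2 d, 0 < d & forall s, a <= s <= b -> `|s - t| < d -> `|f s - f t| < e.
Proof.
move=> ac /andP[at_ tb] e0; have [d d0 acd] := ac e e0.
exists d => // s /andP[sa sb] std.
have one_interval l r : a <= l -> l <= r -> r <= b -> r - l < d -> `|f r - f l| < e.
  move=> al lr rb rld.
  by have := acd 1%N (fun=> l) (fun=> r); rewrite !big_ord1; apply=> // k _; split.
have [st|ts] := leP s t.
  rewrite distrC; apply: one_interval => //.
  by rewrite distrC ger0_norm ?subr_ge0 in std.
apply: one_interval => //; first exact: ltW.
by rewrite gtr0_norm ?subr_gt0 in std.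
Qed.

End RealAnalysisFacts.

Section IntervalFamilies.
Variable R : realType.
Local Notation mu := (@lebesgue_measure R).

Definition interval_family (G : set R) (u t : R) (n : nat) (l r : nat -> R) :=
  (forall k, (k < n)%N ->
     [/\ u <= l k, l k <= r k, r k <= t & forall z, l k <= z <= r k -> G z]) /\
  (forall k, (k.+1 < n)%N -> r k <= l k.+1).

Definition family_variation (f : R -> R) (n : nat) (l r : nat -> R) :=
  \sum_(k < n) `|f (r k) - f (l k)|.

Lemma interval_family0 G u t l r : interval_family G u t 0 l r.
Proof. by split. Qed.

Lemma interval_family_widen G u t t' n l r :
  t <= t' -> interval_family G u t n l r -> interval_family G u t' n l r.
Proof.
move=> tt' [inG chain]; split => // k kn.
by have [? ? rt ?] := inG k kn; split => //; exact: le_trans rt tt'.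
Qed.

Lemma interval_family_rcons G u t1 t2 n l r :
  u <= t1 -> t1 <= t2 -> (forall z, t1 <= z <= t2 -> G z) ->
  interval_family G u t1 n l r ->
  interval_family G u t2 n.+1 (fun k => if k == n then t1 else l k)
                              (fun k => if k == n then t2 else r k).
Proof.
move=> ut1 t12 G12 [inG chain]; split=> k.
  rewrite ltnS leq_eqVlt => /orP[/eqP->|kn]; first by rewrite eqxx.
  rewrite (ltn_eqF kn); have [? ? rt ?] := inG k kn.
  by split => //; exact: le_trans rt t12.
rewrite ltnS leq_eqVlt => /orP[/eqP kn|kn].
  by rewrite kn eqxx ltn_eqF -?kn //; case: (inG k _); rewrite -?kn.
by rewrite (ltn_eqF kn) (ltn_eqF (ltn_trans (ltnSn k) kn)); exact: chain.
Qed.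

Lemma family_variation_rcons f n l r t1 t2 :
  family_variation f n.+1 (fun k => if k == n then t1 else l k)
                          (fun k => if k == n then t2 else r k) =
  family_variation f n l r + `|f t2 - f t1|.
Proof.
rewrite /family_variation big_ord_recr /= !eqxx; congr (_ + _).
by apply: eq_bigr => k _; rewrite (ltn_eqF (ltn_ord k)).
Qed.

Lemma interval_family_measure_ray G u t n l r x : measurable G ->
  interval_family G u t n l r -> (forall k, k.+1 = n -> r k <= x) ->
  ((\sum_(k < n) (r k - l k))%:E <= mu (G `&` [set` `]-oo, x]]))%E.
Proof.
move=> mG; elim: n x => [|n IH] x [inG chain] rx; first by rewrite big_ord0.
have [_ lr _ Glr] := inG n (ltnSn n).
have itv_measure : mu [set` `]l n, r n]] = (r n - l n)%:E.
  rewrite lebesgue_measure_itv /=; case: ltP => [_|rl]; first by rewrite EFinB.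
  by rewrite (@le_anti _ _ (r n) (l n)) ?subrr // -lee_fin rl lr.
have mItv (i : interval R) : measurable (G `&` [set` i]) by exact: measurableI.
rewrite big_ord_recr /= EFinD -itv_measure.
apply: le_trans (leeD (IH (l n) _ _) (lexx _)) _.
- by split=> [k kn|k kn]; [exact: inG (ltnW kn) | exact: chain (ltnW kn)].
- by move=> k kn; rewrite -kn; apply: chain; rewrite kn.
rewrite -measureU //=; last 2 first.
- by apply: measurableI => //; exact: measurable_itv.
- apply/seteqP; split => // z [[_]]; rewrite /= !in_itv /= => zl /andP[lz _].
  by move: (lt_le_trans lz zl); rewrite ltxx.
apply: le_measure; rewrite ?inE; first exact: measurableU (mItv _) (measurable_itv _).
  exact: mItv.
have rnx : r n <= x by exact: rx.
move=> z [[Gz]|]; rewrite /= !in_itv /= => zl.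
  by split; rewrite // (le_trans zl) // (le_trans lr).
by case/andP: zl => lz zr; split; [apply: Glr; rewrite zr ltW | exact: le_trans zr rnx].
Qed.

Lemma interval_family_measure G u t n l r : measurable G ->
  interval_family G u t n l r -> ((\sum_(k < n) (r k - l k))%:E <= mu G)%E.
Proof.
move=> mG fam; have last_le k : k.+1 = n -> r k <= t.
  by move=> kn; case: (fam.1 k); rewrite -?kn.
apply: le_trans (interval_family_measure_ray mG fam last_le) _.
apply: le_measure; rewrite ?inE //.
by apply: measurableI => //; exact: measurable_itv.
Qed.

Definition variations (G : set R) (f : R -> R) (u t : R) : set R :=
  [set y | exists n l r,
     interval_family G u t n l r /\ y = family_variation f n l r].

Definition variation_in (G : set R) (f : R -> R) (u t : R) : R :=
  sup (variations G f u t).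

Lemma variations0 G f u t : variations G f u t 0.
Proof.
exists 0%N, (fun=> 0), (fun=> 0); split; first exact: interval_family0.
by rewrite /family_variation big_ord0.
Qed.

Lemma abs_continuous_small_variation (f : R -> R) (u v e : R) (E : set R) :
  abs_continuous_on f u v -> mu.-negligible E -> 0 < e ->
  exists G, [/\ open G, E `<=` G &
    forall n l r, interval_family G u v n l r -> family_variation f n l r < e].
Proof.
move=> fac [A [mA A0 EA]] e0; have [d d0 acd] := fac e e0.
have Afin : (mu A < +oo)%E by rewrite A0 ltry.
have [G [oG AG GA]] := lebesgue_regularity_outer mA Afin d0.
have muG : (mu G < d%:E)%E.
  apply: le_lt_trans GA; rewrite -{1}(setDUK AG) setUC.
  apply: le_trans (measureU2 mu (measurableD (open_measurable oG) mA) mA) _.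
  by rewrite [X in (_ + X)%E]A0 adde0.
exists G; split => [//||n l r fam]; first exact: subset_trans EA AG.
apply: acd; [by move=> k /fam.1[] | exact: fam.2 |].
rewrite -lte_fin; apply: le_lt_trans muG.
exact: interval_family_measure (open_measurable oG) fam.
Qed.

End IntervalFamilies.

Section ComparisonPrinciple.
Variable R : realType.
Variables (f : R -> R) (u v m e : R) (G E : set R).
Hypotheses (uv : u <= v) (fac : abs_continuous_on f u v) (e0 : 0 < e).
Hypotheses (oG : open G) (EG : E `<=` G).
Hypothesis small_variation :
  forall n l r, interval_family G u v n l r -> family_variation f n l r < e.
Hypothesis fu : f u <= m.
Hypothesis dini :
  forall t, u <= t < v -> ~ E t -> m < f t -> (dini_upper f t <= 0)%E.

Local Notation V := (variation_in G f u).

Lemma variations_ub t : t <= v -> ubound (variations G f u t) e.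
Proof.
move=> tv y [n [l [r [fam ->]]]]; apply/ltW/small_variation.
exact: interval_family_widen tv fam.
Qed.

Lemma has_sup_variations t : t <= v -> has_sup (variations G f u t).
Proof.
by move=> tv; split; [exists 0; exact: variations0 | exists e; exact: variations_ub].
Qed.

Lemma variation_in_ge0 t : t <= v -> 0 <= V t.
Proof.
by move=> tv; apply: (ub_le_sup (has_sup_variations tv).2); exact: variations0.
Qed.

Lemma variation_in_le t : t <= v -> V t <= e.
Proof.
by move=> tv; apply: ge_sup; [exists 0; exact: variations0 | exact: variations_ub].
Qed.

Lemma variation_in_mono t t' : t <= t' -> t' <= v -> V t <= V t'.
Proof.
move=> tt' t'v; apply: ge_sup; first by exists 0; exact: variations0.
move=> y [n [l [r [fam ->]]]]; apply: (ub_le_sup (has_sup_variations t'v).2).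
by exists n, l, r; split => //; exact: interval_family_widen tt' fam.
Qed.

Lemma variation_in_extend t1 t2 : u <= t1 -> t1 <= t2 -> t2 <= v ->
  (forall z, t1 <= z <= t2 -> G z) -> V t1 + `|f t2 - f t1| <= V t2.
Proof.
move=> ut1 t12 t2v G12; rewrite -lerBrDr.
apply: ge_sup; first by exists 0; exact: variations0.
move=> y [n [l [r [fam ->]]]]; rewrite lerBrDr -family_variation_rcons.
apply: (ub_le_sup (has_sup_variations t2v).2); do 3 eexists; split; last by [].
exact: interval_family_rcons.
Qed.

Let bound t := m + e * (t - u) + e + V t.

Lemma comparison_step t : u <= t < v -> f t <= bound t ->
  exists2 r, 0 < r & forall s, t < s <= v -> s < t + r -> f s <= bound s.
Proof.
case/andP=> ut tv ft; rewrite /bound in ft *.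
have tuv : u <= t <= v by rewrite ut ltW.
have ege s : t <= s -> e * (t - u) <= e * (s - u).
  by move=> ts; apply: ler_wpM2l; [exact: ltW | lra].
have [ftm|mft] := leP (f t) m.
  have [d d0 near_t] := abs_continuous_on_cont fac tuv e0.
  exists d => // s /andP[ts sv] sd.
  have /ltr_normlP[_] : `|f s - f t| < e.
    by apply: near_t; [rewrite sv (le_trans ut (ltW ts)) | rewrite gtr0_norm; lra].
  have := variation_in_ge0 sv; have := ege s (ltW ts).
  have : 0 <= e * (t - u) by apply: mulr_ge0; [exact: ltW | rewrite subr_ge0].
  lra.
have [Gt|nGt] := pselect (G t).
  have /nbhs_ballP[r r0 ballG] := oG Gt.
  exists r => // s /andP[ts sv] sr.
  have inG z : t <= z <= s -> G z.
    case/andP=> tz zs; apply: ballG.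
    by rewrite /ball /= ltr_distlC; apply/andP; split; lra.
  have := variation_in_extend ut (ltW ts) sv inG.
  have := ler_norm (f s - f t); have := ege s (ltW ts).
  lra.
have dini_t : (dini_upper f t < e%:E)%E.
  apply: le_lt_trans (dini _ (fun Et => nGt (EG Et)) mft) _ => //.
  by rewrite ut tv.
have [r r0 incr] := dini_upper_lt dini_t.
exists r => // s /andP[ts sv] sr.
have := incr (s - t); rewrite subrKC => /(_ _) fst.
have {fst} : f s - f t <= e * (s - t) by apply: fst; apply/andP; split; lra.
have := variation_in_mono (ltW ts) sv.
have : e * (s - u) = e * (t - u) + e * (s - t) by ring.
lra.
Qed.

Lemma comparison_closed t : u < t <= v ->
  (forall s, u <= s < t -> f s <= bound s) -> f t <= bound t.
Proof.
case/andP=> ut tv below; rewrite /bound in below *.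
apply/ler_addgt0Pr => eta eta0.
have tuv : u <= t <= v by rewrite tv ltW.
have [d d0 near_t] := abs_continuous_on_cont fac tuv eta0.
pose s := Num.max u (t - d / 2).
have us : u <= s by rewrite le_max lexx.
have st : s < t by rewrite gt_max ut /= ltrBlDr ltrDl divr_gt0.
have /ltr_normlP[close_t _] : `|f s - f t| < eta.
  apply: near_t; first by rewrite us (le_trans (ltW st) tv).
  have : t - d / 2 <= s by rewrite le_max lexx orbT.
  by rewrite ltr0_norm ?subr_lt0 //; lra.
have := below s (introT andP (conj us st)).
have := variation_in_mono (ltW st) tv.
have : e * (s - u) <= e * (t - u) by apply: ler_wpM2l; [exact: ltW | lra].
lra.
Qed.

Lemma comparison_bound : f v <= m + e * (v - u) + e + e.
Proof.
have Pv : f v <= bound v.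
  apply: (real_induction (P := fun t => f t <= bound t) uv).
  - rewrite /bound subrr mulr0 addr0.
    by have := variation_in_ge0 uv; have := fu; have := e0; lra.
  - exact: comparison_step.
  - exact: comparison_closed.
by have := variation_in_le (lexx v); rewrite /bound in Pv; lra.
Qed.

End ComparisonPrinciple.

Section DiniComparison.
Variable R : realType.
Local Notation mu := (@lebesgue_measure R).

Lemma abs_continuous_dini_bound (f : R -> R) (u v m : R) (E : set R) :
  u <= v -> abs_continuous_on f u v -> mu.-negligible E -> f u <= m ->
  (forall t, u <= t < v -> ~ E t -> m < f t -> (dini_upper f t <= 0)%E) ->
  f v <= m.
Proof.
move=> uv fac nE fu dini; apply/ler_addgt0Pr => e' e'0.
have vu2 : 0 < v - u + 2 by lra.
pose e := e' / (v - u + 2).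
have e0 : 0 < e by exact: divr_gt0.
have [G [oG EG smallG]] := abs_continuous_small_variation fac nE e0.
have := comparison_bound uv fac e0 oG EG smallG fu dini.
have : e' = e * (v - u) + e + e by rewrite /e; field; rewrite gt_eqF.
lra.
Qed.

End DiniComparison.

Lemma max_dist_le (R : realDomainType) (p q p' q' : R) :
  `|Num.max p q - Num.max p' q'| <= `|p - p'| + `|q - q'|.
Proof.
have := ler_norm (p - p'); have := ler_norm (p' - p).
have := ler_norm (q - q'); have := ler_norm (q' - q).
rewrite (distrC p') (distrC q') ler_norml !maxEle.
by case: (leP p q); case: (leP p' q') => *; apply/andP; split; lra.
Qed.

Section MaxAbs.
Variable R : realType.

Lemma maxabs_dist_le N (x : R -> 'I_N -> R) (A : {set 'I_N}) s t :
  `|maxabs x A s - maxabs x A t| <= \sum_i `|x s i - x t i|.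
Proof.
apply: le_trans (_ : _ <= \sum_(i in A) `|x s i - x t i|) _.
  apply: (big_rec3 (fun y1 y2 y3 => `|y1 - y2| <= y3)).
    by rewrite subrr normr0.
  move=> i y1 y2 y3 _ IH; apply: le_trans (max_dist_le _ _ _ _) _.
  by apply: lerD => //; exact: ler_dist_dist.
rewrite [X in _ <= X](bigID (mem A)) /= lerDl.
by apply: sumr_ge0 => i _.
Qed.

Lemma maxabs_ge0 N (x : R -> 'I_N -> R) (A : {set 'I_N}) t : 0 <= maxabs x A t.
Proof.
by apply: (big_rec (fun y => 0 <= y)) => // i y _ y0; rewrite le_max y0 orbT.
Qed.

Lemma abs_continuous_on_dominated (I : finType) (g : I -> R -> R) (f : R -> R)
    (u v : R) :
  (forall s t, `|f s - f t| <= \sum_i `|g i s - g i t|) ->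
  (forall i, abs_continuous_on (g i) u v) -> abs_continuous_on f u v.
Proof.
move=> fg gac eps eps0.
(* [#|I|.+1] keeps the denominator positive when [I] is empty. *)
pose eps' := eps / #|I|.+1%:R.
have eps'0 : 0 < eps' by exact: divr_gt0.
have /choice[d dP] := fun i => iffLR (exists2P _ _) (gac i eps' eps'0).
pose dmin := \big[Num.min/1]_i d i.
have dmin0 : 0 < dmin.
  by apply: (big_rec (fun y => 0 < y)) => // i y _ y0; rewrite lt_min y0 (dP i).1.
have dmin_le i : dmin <= d i by rewrite /dmin (bigD1 i) //= ge_min lexx.
exists dmin => // n l r lrI chain small.
apply: le_lt_trans (_ : _ <= \sum_(k < n) \sum_i `|g i (r k) - g i (l k)|) _.
  by apply: ler_sum => k _; exact: fg.
rewrite exchange_big /=; apply: le_lt_trans (_ : _ <= \sum_(i : I) eps') _.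
  apply: ler_sum => i _; apply/ltW/(dP i).2 => //.
  exact: lt_le_trans small (dmin_le i).
rewrite sumr_const -mulr_natl /eps' mulrCA gtr_pMr // ltr_pdivrMr //.
by rewrite mul1r ltr_nat; exact: ltnSn.
Qed.

End MaxAbs.

Theorem lemma3 (R : realType) (N : nat) (a : R -> 'I_N -> 'I_N -> R)
  (x : R -> 'I_N -> R) (M0 delta T t0 : R) (S : {set 'I_N}) (s k : nat) :
  (2 <= N)%N ->
  (* (A1) *)
  (forall i j, A1_coef (fun t => a t i j)) ->
  (* (A2) *)
  (forall i t, a t i i = 0) ->
  (* (A3) *)
  0 < M0 ->
  (forall i j t1 t2, 0 <= t1 -> t1 <= t2 ->
      integ (fun t => `|a t i j|) t1 t2 <= M0 * (t2 - t1)) ->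
  (* x is a Caratheodory solution of the zero-input dynamics *)
  caratheodory_solution a x ->
  0 < delta -> 0 < T -> 0 <= t0 ->
  uniformly_quasi_strongly_connected a delta T ->
  (forall t, t0 <= t ->
     is_scc (arc_rel a delta t (t + T)) S /\
     forall i, i \notin S -> exists2 j, j \in S & dpath a delta t (t + T) j i) ->
  {ae (@lebesgue_measure R), forall t, t0 <= t ->
     (dini_upper (maxabs x (~: S)) t <=
        (M0 * #|S|%:R * (maxabs x S t - maxabs x (~: S) t))%:E)%E /\
     (dini_upper (maxabs x S) t <= 0)%E} ->
  let K := k%:R * T in
  let c := maxabs x S in
  let h := maxabs x (~: S) in
  {ae (@lebesgue_measure R), forall t,
     t0 + s%:R * K <= t <= t0 + (s.+1)%:R * K ->
     c t <= c (t0 + s%:R * K) /\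
     h t <= h (t0 + s%:R * K) + c (t0 + s%:R * K)}.
Proof.
move=> _ _ _ M0_gt0 _ [xac _] _ T_gt0 t0_ge0 _ _ dini_ae K c h.
set tau := t0 + s%:R * K.
have t0tau : t0 <= tau.
  by rewrite lerDl; apply: mulr_ge0 => //; apply: mulr_ge0 => //; exact: ltW.
have maxabs_ac A w : tau <= w -> abs_continuous_on (maxabs x A) tau w.
  move=> tauw; apply: (abs_continuous_on_dominated (g := fun i r => x r i)).
    exact: maxabs_dist_le.
  by move=> i; apply: xac (le_trans t0_ge0 t0tau) tauw.
have c_le w : tau <= w -> c w <= c tau.
  move=> tauw; apply: abs_continuous_dini_bound (maxabs_ac _ _ tauw) dini_ae _ _ => //.
  by move=> r /andP[taur _] /contrapT/(_ (le_trans t0tau taur))[_].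
apply: aeW => t /andP[taut _]; split; first exact: c_le.
apply: abs_continuous_dini_bound (maxabs_ac _ _ taut) dini_ae _ _ => //.
  by rewrite lerDl maxabs_ge0.
move=> r /andP[taur _] /contrapT/(_ (le_trans t0tau taur))[dini_h _] hr.
apply: le_trans dini_h _; rewrite lee_fin; apply: mulr_ge0_le0.
  exact: mulr_ge0 (ltW M0_gt0) _.
have := c_le r taur; have := maxabs_ge0 x (~: S) tau.
by rewrite /c /h in hr *; lra.
Qed.
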